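(* Let $g:\mathbb Z\times\mathbb Z\to[0,\infty)$ be bounded by a polynomial in $|y|$ and $|z|$. Then for every $\theta\in(\underline\theta,\bar\theta)$, $$\mathbf E^\theta\big[(p(\omega_0,\omega_1)+q(\omega_0,\omega_1))\,g(\omega_0,\omega_1)\big]<\infty,$$ where $\omega_0,\omega_1$ are independent with law $\mu^\theta$.
   Context: Fix extended integers $-\infty\le\omega^{\min}\le0$, $1\le\omega^{\max}\le\infty$, $I=\{z\in\mathbb Z:\omega^{\min}-1<z<\omega^{\max}+1\}$. Rates $p,q:I\times I\to[0,\infty)$ satisfy: (R1) $p(\omega^{\min},\cdot)\equiv p(\cdot,\omega^{\max})\equiv q(\omega^{\max},\cdot)\equiv q(\cdot,\omega^{\min})\equiv0$ whenever the corresponding boundary is finite; either $p,q$ are both strictly positive in all other cases, or one is identically $0$. (R2) $p(z+1,y)\ge p(z,y)$, $p(y,z+1)\le p(y,z)$, $q(z+1,y)\le q(z,y)$, $q(y,z+1)\ge q(y,z)$ whenever $y,z,z+1\in I$. (R3) For all $x,y,z\in I$: $p(x,y)+p(y,z)+p(z,x)+q(x,y)+q(y,z)+q(z,x)=p(x,z)+p(z,y)+p(y,x)+q(x,z)+q(z,y)+q(y,x)$. (R4) There are symmetric functions $s_p,s_q$ on $I\times I$ and $f:I\to[0,\infty)$ with $f(\omega^{\min})=0$ if finite and $f(z)>0$ for $z>\omega^{\min}$, such that $p(y,z)=s_p(y,z+1)f(y)$, $q(y,z)=s_q(y+1,z)f(z)$ ($s_p,s_q$ read as $0$ if an argument exceeds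 $\omega^{\max}$). Set $f(0)!=1$, $f(z)!=\prod_{y=1}^zf(y)$ ($z>0$), $f(z)!=1/\prod_{y=z+1}^0f(y)$ ($z<0$); $\bar\theta=\lim_{z\to\infty}\log f(z)$ if $\omega^{\max}=\infty$, else $\infty$; $\underline\theta=\lim_{z\to\infty}\log f(-z)$ if $\omega^{\min}=-\infty$, else $-\infty$; assume $\underline\theta<\bar\theta$. For $\theta\in(\underline\theta,\bar\theta)$, $\mu^\theta(z)=e^{\theta z}/(Z(\theta)f(z)!)$ with $Z(\theta)=\sum_{z\in I}e^{\theta z}/f(z)!<\infty$; $\mathbf E^\theta$ is expectation under the product of $\mu^\theta$. *)

From Stdlib Require Import Bool Reals ZArith List.
From Coquelicot Require Import Coquelicot.
Open Scope R_scope.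

(* Extended integer boundaries: [wmin = None] means omega^min = -oo,
   [wmax = None] means omega^max = +oo. *)

Definition inIb (wmin wmax : option Z) (z : Z) : bool :=
  andb (match wmin with Some m => Z.leb m z | None => true end)
  (match wmax with Some M => Z.leb z M | None => true end).

Definition inI (wmin wmax : option Z) (z : Z) : Prop := inIb wmin wmax z = true.

Definition bounds_ok (wmin wmax : option Z) : Prop :=
  (forall m, wmin = Some m -> (m <= 0)%Z) /\ (forall M, wmax = Some M -> (1 <= M)%Z).

Definition rates_nonneg (wmin wmax : option Z) (p q : Z -> Z -> R) : Prop :=
  forall x y, inI wmin wmax x -> inI wmin wmax y -> 0 <= p x y /\ 0 <= q x y.

Definition rates_R1 (wmin wmax : option Z) (p q : Z -> Z -> R) : Prop :=
  (forall m, wmin = Some m -> forall y, inI wmin wmax y -> p m y = 0 /\ q y m = 0) /\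
  (forall M, wmax = Some M -> forall y, inI wmin wmax y -> p y M = 0 /\ q M y = 0) /\
  ( ( (forall x y, inI wmin wmax x -> inI wmin wmax y ->
         wmin <> Some x -> wmax <> Some y -> 0 < p x y) /\
      (forall x y, inI wmin wmax x -> inI wmin wmax y ->
         wmax <> Some x -> wmin <> Some y -> 0 < q x y) )
    \/ (forall x y, inI wmin wmax x -> inI wmin wmax y -> p x y = 0)
    \/ (forall x y, inI wmin wmax x -> inI wmin wmax y -> q x y = 0) ).

Definition rates_R2 (wmin wmax : option Z) (p q : Z -> Z -> R) : Prop :=
  forall y z, inI wmin wmax y -> inI wmin wmax z -> inI wmin wmax (z + 1)%Z ->
    p (z + 1)%Z y >= p z y /\ p y (z + 1)%Z <= p y z /\
    q (z + 1)%Z y <= q z y /\ q y (z + 1)%Z >= q y z.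

Definition rates_R3 (wmin wmax : option Z) (p q : Z -> Z -> R) : Prop :=
  forall x y z, inI wmin wmax x -> inI wmin wmax y -> inI wmin wmax z ->
    p x y + p y z + p z x + q x y + q y z + q z x =
    p x z + p z y + p y x + q x z + q z y + q y x.

(* "s read as 0 if an argument exceeds omega^max" *)
Definition exceeds (wmax : option Z) (a : Z) : bool :=
  match wmax with Some M => Z.ltb M a | None => false end.

Definition ext0 (wmax : option Z) (s : Z -> Z -> R) (a b : Z) : R :=
  if orb (exceeds wmax a) (exceeds wmax b) then 0 else s a b.

Definition rates_R4 (wmin wmax : option Z) (p q : Z -> Z -> R)
    (sp sq : Z -> Z -> R) (f : Z -> R) : Prop :=
  (forall a b, inI wmin wmax a -> inI wmin wmax b -> sp a b = sp b a /\ sq a b = sq b a) /\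
  (forall z, inI wmin wmax z -> 0 <= f z) /\
  (forall m, wmin = Some m -> f m = 0) /\
  (forall z, inI wmin wmax z ->
     (match wmin with Some m => (m < z)%Z | None => True end) -> 0 < f z) /\
  (forall y z, inI wmin wmax y -> inI wmin wmax z ->
     p y z = ext0 wmax sp y (z + 1)%Z * f y /\
     q y z = ext0 wmax sq (y + 1)%Z z * f z).

Fixpoint prodZ (f : Z -> R) (a : Z) (n : nat) : R :=
  match n with
  | O => 1
  | S k => f a * prodZ f (a + 1)%Z k
  end.

Definition zfact (f : Z -> R) (z : Z) : R :=
  match z with
  | Z0 => 1
  | Zpos _ => prodZ f 1%Z (Z.to_nat z)
  | Zneg _ => / prodZ f (z + 1)%Z (Z.to_nat (- z))
  end.

Definition theta_bar_spec (wmax : option Z) (f : Z -> R) (tb : Rbar) : Prop :=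
  (wmax = None -> is_lim_seq (fun n : nat => ln (f (Z.of_nat n))) tb) /\
  (wmax <> None -> tb = p_infty).

Definition theta_low_spec (wmin : option Z) (f : Z -> R) (tl : Rbar) : Prop :=
  (wmin = None -> is_lim_seq (fun n : nat => ln (f (- Z.of_nat n)%Z)) tl) /\
  (wmin <> None -> tl = m_infty).

Definition zterm (wmin wmax : option Z) (f : Z -> R) (th : R) (z : Z) : R :=
  if inIb wmin wmax z then exp (th * IZR z) / zfact f z else 0.

Definition Zpart (wmin wmax : option Z) (f : Z -> R) (th : R) : R :=
  Series (fun n : nat => zterm wmin wmax f th (Z.of_nat n)) +
  Series (fun n : nat => zterm wmin wmax f th (- Z.of_nat n - 1)%Z).

Definition mu (wmin wmax : option Z) (f : Z -> R) (th : R) (z : Z) : R :=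
  exp (th * IZR z) / (Zpart wmin wmax f th * zfact f z).

Definition zrange (N : nat) : list Z :=
  map (fun k : nat => (Z.of_nat k - Z.of_nat N)%Z) (seq 0 (2 * N + 1)).

Definition sumZ (N : nat) (F : Z -> R) : R :=
  fold_right (fun z acc => F z + acc) 0 (zrange N).

Definition box_expect (wmin wmax : option Z) (f : Z -> R) (th : R)
    (h : Z -> Z -> R) (N : nat) : R :=
  sumZ N (fun y => sumZ N (fun z =>
    if andb (inIb wmin wmax y) (inIb wmin wmax z)
    then mu wmin wmax f th y * mu wmin wmax f th z * h y z else 0)).

(* E^theta[h(omega_0, omega_1)] < oo for nonnegative h, omega_0, omega_1 iid mu^theta:
   the (nonnegative) sum over I x I is finite, i.e. its partial sums are bounded. *)
Definition finite_expectation2 (wmin wmax : option Z) (f : Z -> R) (th : R)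
    (h : Z -> Z -> R) : Prop :=
  exists B : R, forall N : nat, box_expect wmin wmax f th h N <= B.

Definition poly_bounded (g : Z -> Z -> R) : Prop :=
  exists (d : nat) (c : nat -> nat -> R), forall y z : Z,
    g y z <= sum_f_R0 (fun i => sum_f_R0 (fun j =>
               c i j * Rabs (IZR y) ^ i * Rabs (IZR z) ^ j) d) d.

(* The unnormalised weights [zterm z = e^{th z} / f(z)!] satisfy
   [zterm (z + 1) * f (z + 1) = e^th * zterm z].  Since [th] lies strictly between the
   limits of [log f] at [-oo] and [+oo], the ratio of consecutive weights is eventually
   below some [r < 1] on both sides, so [zterm z <= C r^|z|].

   Writing [y' = max y 1] and [z' = min z 0], (R4) and the symmetry of [s_p] give
   [p y' z' * f (z' + 1) = f y' * p (z' + 1) (y' - 1)], and the monotonicity (R2) then yields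
   [p y z <= p 1 0 * f y' / f (z' + 1)].  The factors [f y'] and [1 / f (z' + 1)] are
   absorbed by shifting the weights by one step, so [zterm y * zterm z * p y z] is
   [O(r^|y| r^|z|)]; the same holds for [q] with the arguments exchanged.  A polynomial
   times [r^|y| r^|z|] is summable over [Z x Z]. *)

From Stdlib Require Import Bool Reals ZArith Lia Lra List.
From Coquelicot Require Import Coquelicot.
Open Scope R_scope.
Arguments inI wmin wmax z%_Z_scope.
Arguments inIb wmin wmax z%_Z_scope.

Section Interval.
Variables wmin wmax : option Z.

Lemma inI_iff z : inI wmin wmax z <->
  (forall m, wmin = Some m -> (m <= z)%Z) /\ (forall M, wmax = Some M -> (z <= M)%Z).
Proof.
  unfold inI, inIb; destruct wmin as [m|], wmax as [M|]; simpl.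
  all: rewrite ?andb_true_iff, ?andb_true_r, ?Z.leb_le.
  all: split; [intros H; split; intros ? E; inversion E; subst; lia|].
  all: intros [H1 H2]; try split; auto.
Qed.

Lemma inI_between a b c :
  inI wmin wmax a -> inI wmin wmax b -> (a <= c <= b)%Z -> inI wmin wmax c.
Proof.
  rewrite !inI_iff; intros [Ha _] [_ Hb] Hc.
  split; [intros m E; specialize (Ha m E) | intros M E; specialize (Hb M E)]; lia.
Qed.

Lemma inI_max a b : inI wmin wmax a -> inI wmin wmax b -> inI wmin wmax (Z.max a b).
Proof. now destruct (Z.max_spec a b) as [[_ ->]|[_ ->]]. Qed.

Lemma inI_min a b : inI wmin wmax a -> inI wmin wmax b -> inI wmin wmax (Z.min a b).
Proof. now destruct (Z.min_spec a b) as [[_ ->]|[_ ->]]. Qed.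

Lemma inI_0 : bounds_ok wmin wmax -> inI wmin wmax 0.
Proof.
  intros [H1 H2]; apply inI_iff.
  split; intros ? E; [apply H1 in E | apply H2 in E]; lia.
Qed.

Lemma inI_1 : bounds_ok wmin wmax -> inI wmin wmax 1.
Proof.
  intros [H1 H2]; apply inI_iff.
  split; intros ? E; [apply H1 in E | apply H2 in E]; lia.
Qed.

Lemma I_nondecreasing (h : Z -> R) :
  (forall z, inI wmin wmax z -> inI wmin wmax (z + 1) -> h z <= h (z + 1)%Z) ->
  forall a b, inI wmin wmax a -> inI wmin wmax b -> (a <= b)%Z -> h a <= h b.
Proof.
  intros Hstep a b Ha Hb Hab.
  replace b with (a + Z.of_nat (Z.to_nat (b - a)))%Z in * by lia.
  induction (Z.to_nat (b - a)) as [|n IH].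
  - rewrite Z.add_0_r; lra.
  - assert (Hn : inI wmin wmax (a + Z.of_nat n))
      by (apply (inI_between a (a + Z.of_nat (S n))); auto; lia).
    replace (a + Z.of_nat (S n))%Z with (a + Z.of_nat n + 1)%Z in * by lia.
    apply (Rle_trans _ _ _ (IH Hn ltac:(lia))), Hstep; auto.
Qed.

Lemma I_nonincreasing (h : Z -> R) :
  (forall z, inI wmin wmax z -> inI wmin wmax (z + 1) -> h (z + 1)%Z <= h z) ->
  forall a b, inI wmin wmax a -> inI wmin wmax b -> (a <= b)%Z -> h b <= h a.
Proof.
  intros Hstep a b Ha Hb Hab.
  enough (- h a <= - h b) by lra.
  apply (I_nondecreasing (fun z => - h z)); auto.
  intros z Hz Hz1; specialize (Hstep z Hz Hz1); lra.
Qed.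

End Interval.

Lemma sumZ_le N F G : (forall z, F z <= G z) -> sumZ N F <= sumZ N G.
Proof. intros H; unfold sumZ; induction (zrange N); simpl; [lra|]. specialize (H a); lra. Qed.

Lemma sumZ_nonneg N F : (forall z, 0 <= F z) -> 0 <= sumZ N F.
Proof. intros H; unfold sumZ; induction (zrange N); simpl; [lra|]. specialize (H a); lra. Qed.

Lemma sumZ_scal N F c : sumZ N (fun z => c * F z) = c * sumZ N F.
Proof. unfold sumZ; induction (zrange N); simpl; [ring|]. rewrite IHl; ring. Qed.

Lemma sumZ_ext N F G : (forall z, F z = G z) -> sumZ N F = sumZ N G.
Proof. intros H; unfold sumZ; induction (zrange N); simpl; [ring|]. now rewrite H, IHl. Qed.

Lemma sumZ_mul N F G :
  sumZ N (fun y => sumZ N (fun z => F y * G z)) = sumZ N F * sumZ N G.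
Proof.
  rewrite (sumZ_ext N _ (fun y => sumZ N G * F y)), sumZ_scal; [ring|].
  intros y; rewrite sumZ_scal; ring.
Qed.

Lemma zrange_S N :
  zrange (S N) = (- Z.of_nat (S N))%Z :: zrange N ++ (Z.of_nat (S N) :: nil).
Proof.
  unfold zrange.
  replace (2 * S N + 1)%nat with (S (S (2 * N + 1))) by lia.
  rewrite seq_S; cbn [seq map]; rewrite map_app; cbn [map app].
  f_equal; f_equal.
  - rewrite <- seq_shift, map_map; apply map_ext; intros k; lia.
  - f_equal; lia.
Qed.

Lemma sumZ_S N F :
  sumZ (S N) F = F (- Z.of_nat (S N))%Z + sumZ N F + F (Z.of_nat (S N)).
Proof.
  unfold sumZ; rewrite zrange_S; simpl.
  induction (zrange N); simpl; lra.
Qed.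

Lemma sumZ_abs_le (b : nat -> R) N : (forall n, 0 <= b n) ->
  sumZ N (fun z => b (Z.abs_nat z)) <= 2 * sum_f_R0 b N.
Proof.
  intros Hb; induction N as [|N IH].
  - unfold sumZ, zrange; simpl; specialize (Hb 0%nat); lra.
  - rewrite sumZ_S; simpl sum_f_R0.
    replace (Z.abs_nat (- Z.of_nat (S N))) with (S N) by lia.
    rewrite Zabs2Nat.id; lra.
Qed.

Lemma sum_f_R0_term_le (a : nat -> R) N n :
  (forall k, 0 <= a k) -> (n <= N)%nat -> a n <= sum_f_R0 a N.
Proof.
  intros Ha; induction N as [|N IH]; intros Hn; simpl.
  - replace n with 0%nat by lia; lra.
  - assert (0 <= sum_f_R0 a N) by (apply cond_pos_sum; auto).
    specialize (Ha (S N)).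
    destruct (Nat.eq_dec n (S N)) as [->|Hne]; [lra|].
    specialize (IH ltac:(lia)); lra.
Qed.

(* The constant is [sum_{k <= N0} u k / r^k], which covers the first [N0] terms. *)
Lemma geometric_bound_of_eventual_ratio (u : nat -> R) (r : R) (N0 : nat) :
  0 < r -> (forall n, 0 <= u n) ->
  (forall n, (N0 <= n)%nat -> u (S n) <= r * u n) ->
  exists C, 0 <= C /\ forall n, u n <= C * r ^ n.
Proof.
  intros Hr Hu Hratio.
  set (C := sum_f_R0 (fun k => u k / r ^ k) N0).
  assert (Hq : forall k, 0 <= u k / r ^ k)
    by (intros k; apply Rdiv_le_0_compat; auto; apply pow_lt; auto).
  assert (Hinit : forall n, (n <= N0)%nat -> u n <= C * r ^ n).
  { intros n Hn; assert (Hrn : 0 < r ^ n) by (apply pow_lt; auto).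
    assert (H := sum_f_R0_term_le _ N0 n Hq Hn); fold C in H.
    replace (u n) with (u n / r ^ n * r ^ n) by (field; lra).
    apply Rmult_le_compat_r; lra. }
  exists C; split; [apply cond_pos_sum; auto|].
  intros n; destruct (le_lt_dec n N0) as [Hn|Hn]; auto.
  replace n with (N0 + (n - N0))%nat by lia.
  induction (n - N0)%nat as [|k IH]; [rewrite Nat.add_0_r; auto|].
  replace (N0 + S k)%nat with (S (N0 + k)) by lia.
  apply Rle_trans with (r * u (N0 + k)%nat); [apply Hratio; lia|].
  simpl; apply (Rmult_le_compat_l r) in IH; lra.
Qed.

Lemma sum_f_R0_geometric_le (C s : R) N : 0 <= C -> 0 <= s < 1 ->
  sum_f_R0 (fun n => C * s ^ n) N <= C / (1 - s).
Proof.
  intros HC Hs.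
  replace (sum_f_R0 (fun n => C * s ^ n) N) with (C * sum_f_R0 (fun n => s ^ n) N)
    by (rewrite scal_sum; apply sum_eq; intros; ring).
  rewrite tech3 by lra.
  assert (0 <= s ^ S N) by (apply pow_le; lra).
  unfold Rdiv; apply Rmult_le_compat_l; auto.
  rewrite <- (Rmult_1_l (/ (1 - s))) at 2.
  apply Rmult_le_compat_r; [left; apply Rinv_0_lt_compat|]; lra.
Qed.

Lemma pow_1_plus_le d x : 0 <= x <= 1 -> (1 + x) ^ d <= 1 + (2 ^ d - 1) * x.
Proof.
  intros Hx; induction d as [|d IH]; simpl; [lra|].
  assert (H2 : 1 <= 2 ^ d) by (apply pow_R1_Rle; lra).
  apply Rle_trans with ((1 + x) * (1 + (2 ^ d - 1) * x)).
  - apply Rmult_le_compat_l; lra.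
  - assert (0 <= (2 ^ d - 1) * (x * (1 - x))) by (apply Rmult_le_pos; nra).
    nra.
Qed.

(* By [(1 + 1/a)^d <= 1 + (2^d - 1)/a], the ratio of consecutive terms is eventually
   at most [(1 + rho) / 2]. *)
Lemma pow_mul_geometric_bound d rho : 0 < rho < 1 ->
  exists K, 0 <= K /\
    forall n, rho ^ n * (1 + INR n) ^ d <= K * ((1 + rho) / 2) ^ n.
Proof.
  intros Hr; set (s := (1 + rho) / 2); set (c := 2 ^ d - 1).
  assert (Hc : 0 <= c) by (assert (1 <= 2 ^ d) by (apply pow_R1_Rle; lra); unfold c; lra).
  destruct (INR_archimed 1 (c * rho / (s - rho))) as [N0 HN0]; [lra|].
  rewrite Rmult_1_r in HN0.
  apply (geometric_bound_of_eventual_ratio _ s N0); [unfold s; lra| |].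
  { intros n; apply Rmult_le_pos; apply pow_le; [lra|]; pose proof (pos_INR n); lra. }
  intros n Hn; rewrite S_INR.
  set (a := 1 + INR n).
  assert (Ha : INR N0 <= INR n) by (apply le_INR; auto).
  assert (Ha1 : 1 <= a) by (unfold a; pose proof (pos_INR n); lra).
  assert (Hlarge : c * rho <= a * (s - rho)).
  { assert (Hsr : 0 < s - rho) by (unfold s; lra).
    replace (c * rho) with (c * rho / (s - rho) * (s - rho)) by (field; lra).
    apply Rmult_le_compat_r; unfold a; lra. }
  assert (Hx : 0 <= / a <= 1).
  { split; [left; apply Rinv_0_lt_compat; lra|].
    rewrite <- Rinv_1; apply Rinv_le_contravar; lra. }
  assert (Hpow := pow_1_plus_le d (/ a) Hx); fold c in Hpow.
  replace (1 + (INR n + 1)) with (a * (1 + / a)) by (unfold a; field; pose proof (pos_INR n); lra).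
  rewrite Rpow_mult_distr; simpl pow.
  assert (0 <= rho ^ n * a ^ d) by (apply Rmult_le_pos; apply pow_le; lra).
  assert (Hk : rho * (1 + c * / a) <= s).
  { apply (Rmult_le_reg_l a); [lra|].
    replace (a * (rho * (1 + c * / a))) with (a * rho + c * rho) by (field; lra). nra. }
  apply Rle_trans with ((rho * (1 + c * / a)) * (rho ^ n * a ^ d)).
  - replace (rho * rho ^ n * (a ^ d * (1 + / a) ^ d))
      with (rho * (1 + / a) ^ d * (rho ^ n * a ^ d)) by ring.
    apply Rmult_le_compat_r; auto; apply Rmult_le_compat_l; lra.
  - apply Rmult_le_compat_r; auto.
Qed.

Lemma prodZ_pos f a n :
  (forall k, (k < n)%nat -> 0 < f (a + Z.of_nat k)%Z) -> 0 < prodZ f a n.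
Proof.
  revert a; induction n as [|n IH]; intros a H; simpl; [lra|].
  apply Rmult_lt_0_compat.
  - specialize (H 0%nat); rewrite Z.add_0_r in H; apply H; lia.
  - apply IH; intros k Hk.
    replace (a + 1 + Z.of_nat k)%Z with (a + Z.of_nat (S k))%Z by lia.
    apply H; lia.
Qed.

Lemma prodZ_S_r f a n : prodZ f a (S n) = prodZ f a n * f (a + Z.of_nat n)%Z.
Proof.
  revert a; induction n as [|n IH]; intros a.
  - simpl; rewrite Z.add_0_r; ring.
  - change (prodZ f a (S (S n))) with (f a * prodZ f (a + 1)%Z (S n)).
    rewrite IH; simpl.
    replace (a + 1 + Z.of_nat n)%Z with (a + Z.pos (Pos.of_succ_nat n))%Z by lia; ring.
Qed.

Lemma zfact_of_nat f n : zfact f (Z.of_nat n) = prodZ f 1 n.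
Proof. destruct n as [|n]; [reflexivity|]. apply (f_equal (prodZ f 1)), Nat2Z.id. Qed.

Lemma zfact_opp_of_nat f n :
  zfact f (- Z.of_nat (S n))%Z = / prodZ f (- Z.of_nat n)%Z (S n).
Proof.
  change (- Z.of_nat (S n))%Z with (Z.neg (Pos.of_succ_nat n)); unfold zfact.
  f_equal; f_equal; lia.
Qed.

Lemma zfact_succ f z : f (z + 1)%Z <> 0 -> zfact f (z + 1)%Z = zfact f z * f (z + 1)%Z.
Proof.
  intros Hf; destruct (Z_le_gt_dec 0 z) as [Hz|Hz].
  - replace z with (Z.of_nat (Z.to_nat z)) by lia.
    replace (Z.of_nat (Z.to_nat z) + 1)%Z with (Z.of_nat (S (Z.to_nat z))) by lia.
    rewrite !zfact_of_nat, prodZ_S_r; do 2 f_equal; lia.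
  - revert Hf; replace z with (- Z.of_nat (S (Z.to_nat (- z - 1))))%Z by lia.
    destruct (Z.to_nat (- z - 1)) as [|n]; intros Hf.
    + rewrite zfact_opp_of_nat; simpl in *; field; auto.
    + replace (- Z.of_nat (S (S n)) + 1)%Z with (- Z.of_nat (S n))%Z in * by lia.
      rewrite !zfact_opp_of_nat.
      change (prodZ f (- Z.of_nat (S n))%Z (S (S n))) with
        (f (- Z.of_nat (S n))%Z * prodZ f (- Z.of_nat (S n) + 1)%Z (S n)).
      replace (- Z.of_nat (S n) + 1)%Z with (- Z.of_nat n)%Z by lia.
      destruct (Req_dec (prodZ f (- Z.of_nat n)%Z (S n)) 0) as [H0|H0].
      * rewrite H0, Rmult_0_r, !Rinv_0; ring.
      * field; auto.
Qed.

Lemma eventually_gt_of_lim u l x : is_lim_seq u l -> Rbar_lt (Finite x) l ->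
  exists y N, x < y /\ forall n, (N <= n)%nat -> y < u n.
Proof.
  intros Hl Hx; apply is_lim_seq_spec in Hl; destruct l as [l| |]; simpl in Hx, Hl.
  - assert (He : 0 < (l - x) / 2) by lra.
    destruct (Hl (mkposreal _ He)) as [N HN]; exists ((x + l) / 2), N; split; [lra|].
    intros n Hn; specialize (HN n Hn); simpl in HN; apply Rabs_def2 in HN; lra.
  - destruct (Hl (x + 1)) as [N HN]; exists (x + 1), N; split; [lra|auto].
  - contradiction.
Qed.

Lemma eventually_lt_of_lim u l x : is_lim_seq u l -> Rbar_lt l (Finite x) ->
  exists y N, y < x /\ forall n, (N <= n)%nat -> u n < y.
Proof.
  intros Hl Hx.
  destruct (eventually_gt_of_lim (fun n => - u n) (Rbar_opp l) (- x)) as [y [N [Hy HN]]].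
  - now apply is_lim_seq_opp in Hl.
  - destruct l; simpl in *; auto; lra.
  - exists (- y), N; split; [lra|]; intros n Hn; specialize (HN n Hn); lra.
Qed.

Lemma option_dec_Z (o : option Z) : (exists a, o = Some a) \/ o = None.
Proof. destruct o; eauto. Qed.

Lemma exp_lt_1 x : x < 0 -> exp x < 1.
Proof. intros H; rewrite <- exp_0; apply exp_increasing; lra. Qed.

Section Weights.
Variables (wmin wmax : option Z) (f : Z -> R).
Hypothesis Hbounds : bounds_ok wmin wmax.
Hypothesis Hf_pos : forall z, inI wmin wmax z ->
  (match wmin with Some m => (m < z)%Z | None => True end) -> 0 < f z.

Lemma f_pos_above w z : inI wmin wmax w -> inI wmin wmax z -> (w < z)%Z -> 0 < f z.
Proof.
  intros Hw Hz Hwz; apply Hf_pos; auto; destruct wmin as [m|]; auto.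
  apply inI_iff in Hw; destruct Hw as [Hw _]; specialize (Hw m eq_refl); lia.
Qed.

Lemma f_1_pos : 0 < f 1%Z.
Proof. apply (f_pos_above 0); [apply inI_0|apply inI_1|]; auto; lia. Qed.

Lemma zfact_pos z : inI wmin wmax z -> 0 < zfact f z.
Proof.
  intros Hz; assert (I0 := inI_0 _ _ Hbounds).
  destruct (Z_le_gt_dec 0 z) as [H0|H0].
  - revert Hz; replace z with (Z.of_nat (Z.to_nat z)) by lia; intros Hz.
    rewrite zfact_of_nat; apply prodZ_pos; intros k Hk.
    apply (f_pos_above 0); [auto| |lia].
    apply (inI_between _ _ 0 (Z.of_nat (Z.to_nat z))); auto; lia.
  - revert Hz; replace z with (- Z.of_nat (S (Z.to_nat (- z - 1))))%Z by lia.
    generalize (Z.to_nat (- z - 1)) as n; intros n Hz.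
    rewrite zfact_opp_of_nat; apply Rinv_0_lt_compat, prodZ_pos; intros k Hk.
    apply (f_pos_above (- Z.of_nat (S n))); [auto| |lia].
    apply (inI_between _ _ (- Z.of_nat (S n)) 0); auto; lia.
Qed.

Variable th : R.

Lemma zterm_nonneg z : 0 <= zterm wmin wmax f th z.
Proof.
  unfold zterm; destruct (inIb wmin wmax z) eqn:E; [|lra].
  left; apply Rdiv_lt_0_compat; [apply exp_pos|apply zfact_pos, E].
Qed.

Lemma zterm_out z : ~ inI wmin wmax z -> zterm wmin wmax f th z = 0.
Proof. unfold zterm, inI; destruct (inIb wmin wmax z); tauto. Qed.

Lemma zterm_succ z : inI wmin wmax z -> inI wmin wmax (z + 1) ->
  zterm wmin wmax f th (z + 1) * f (z + 1)%Z = exp th * zterm wmin wmax f th z.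
Proof.
  intros Hz Hz1; unfold zterm, inI in *; rewrite Hz, Hz1.
  assert (Hf : 0 < f (z + 1)%Z) by (apply (f_pos_above z); auto; lia).
  assert (Hzf := zfact_pos z Hz).
  rewrite zfact_succ, plus_IZR, Rmult_plus_distr_l, Rmult_1_r, exp_plus by lra.
  field; lra.
Qed.

Lemma zterm_div_f_succ z : inI wmin wmax z -> inI wmin wmax (z + 1) ->
  zterm wmin wmax f th z / f (z + 1)%Z = exp (- th) * zterm wmin wmax f th (z + 1).
Proof.
  intros Hz Hz1.
  assert (Hf : 0 < f (z + 1)%Z) by (apply (f_pos_above z); auto; lia).
  assert (Het := exp_pos th).
  replace (zterm wmin wmax f th z)
    with (/ exp th * (zterm wmin wmax f th (z + 1) * f (z + 1)%Z))
    by (rewrite zterm_succ by auto; field; lra).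
  rewrite exp_Ropp; field; lra.
Qed.

Lemma mu_zterm z : inI wmin wmax z ->
  mu wmin wmax f th z = / Zpart wmin wmax f th * zterm wmin wmax f th z.
Proof. unfold mu, zterm, inI; intros ->; unfold Rdiv; rewrite Rinv_mult; ring. Qed.

Lemma zterm_succ_le_of_f_gt z y : inI wmin wmax z -> inI wmin wmax (z + 1) ->
  exp y < f (z + 1)%Z ->
  zterm wmin wmax f th (z + 1) <= exp (th - y) * zterm wmin wmax f th z.
Proof.
  intros Hz Hz1 Hy.
  assert (H0 := zterm_nonneg (z + 1)); assert (Hey := exp_pos y).
  unfold Rminus; rewrite exp_plus, exp_Ropp.
  apply (Rmult_le_reg_r (exp y)); auto.
  replace (exp th * / exp y * zterm wmin wmax f th z * exp y)
    with (exp th * zterm wmin wmax f th z) by (field; lra).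
  rewrite <- zterm_succ by auto; apply Rmult_le_compat_l; lra.
Qed.

Lemma zterm_le_succ_of_f_lt z y : inI wmin wmax z -> inI wmin wmax (z + 1) ->
  f (z + 1)%Z < exp y ->
  zterm wmin wmax f th z <= exp (y - th) * zterm wmin wmax f th (z + 1).
Proof.
  intros Hz Hz1 Hy.
  assert (H0 := zterm_nonneg (z + 1)); assert (Het := exp_pos th).
  unfold Rminus; rewrite exp_plus, exp_Ropp.
  apply (Rmult_le_reg_l (exp th)); auto.
  replace (exp th * (exp y * / exp th * zterm wmin wmax f th (z + 1)))
    with (zterm wmin wmax f th (z + 1) * exp y) by (field; lra).
  rewrite <- zterm_succ by auto; apply Rmult_le_compat_l; lra.
Qed.

Lemma zterm_ratio_pos thbar : theta_bar_spec wmax f thbar -> Rbar_lt th thbar ->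
  exists N0 r, 0 < r < 1 /\ forall n, (N0 <= n)%nat ->
    zterm wmin wmax f th (Z.of_nat (S n)) <= r * zterm wmin wmax f th (Z.of_nat n).
Proof.
  intros [Hlim _] Hth.
  destruct (option_dec_Z wmax) as [[M EM]|EM].
  - exists (Z.to_nat M), (/ 2); split; [lra|]; intros n Hn.
    assert (H0 := zterm_nonneg (Z.of_nat n)).
    rewrite zterm_out; [lra|].
    rewrite inI_iff; intros [_ H]; specialize (H M EM); lia.
  - destruct (eventually_gt_of_lim _ _ th (Hlim EM) Hth) as [y [N [Hy HN]]].
    exists N, (exp (th - y)); split; [split; [apply exp_pos|apply exp_lt_1; lra]|].
    intros n Hn.
    assert (HI : forall k : nat, inI wmin wmax (Z.of_nat k)).
    { intros k; apply inI_iff; split; [|intros M E; congruence].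
      intros m E; destruct Hbounds as [Hb _]; specialize (Hb m E); lia. }
    rewrite Nat2Z.inj_succ, <- Z.add_1_r.
    apply zterm_succ_le_of_f_gt; rewrite ?Z.add_1_r, <- ?Nat2Z.inj_succ; auto.
    assert (Hf : 0 < f (Z.of_nat (S n))) by (apply (f_pos_above 0); [apply inI_0| |lia]; auto).
    rewrite <- (exp_ln _ Hf); apply exp_increasing, HN; lia.
Qed.

Lemma zterm_ratio_neg thlow : theta_low_spec wmin f thlow -> Rbar_lt thlow th ->
  exists N0 r, 0 < r < 1 /\ forall n, (N0 <= n)%nat ->
    zterm wmin wmax f th (- Z.of_nat (S n)) <= r * zterm wmin wmax f th (- Z.of_nat n).
Proof.
  intros [Hlim _] Hth.
  destruct (option_dec_Z wmin) as [[m Em]|Em].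
  - exists (Z.to_nat (- m)), (/ 2); split; [lra|]; intros n Hn.
    assert (H0 := zterm_nonneg (- Z.of_nat n)).
    rewrite zterm_out; [lra|].
    rewrite inI_iff; intros [H _]; specialize (H m Em); lia.
  - destruct (eventually_lt_of_lim _ _ th (Hlim Em) Hth) as [y [N [Hy HN]]].
    exists N, (exp (y - th)); split; [split; [apply exp_pos|apply exp_lt_1; lra]|].
    intros n Hn.
    assert (HI : forall k : nat, inI wmin wmax (- Z.of_nat k)).
    { intros k; apply inI_iff; split; [intros m E; congruence|].
      intros M E; destruct Hbounds as [_ Hb]; specialize (Hb M E); lia. }
    replace (- Z.of_nat n)%Z with (- Z.of_nat (S n) + 1)%Z by lia.
    apply zterm_le_succ_of_f_lt;
      replace (- Z.of_nat (S n) + 1)%Z with (- Z.of_nat n)%Z by lia; auto.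
    assert (Hf : 0 < f (- Z.of_nat n)%Z) by (apply Hf_pos; [apply HI|rewrite Em; trivial]).
    rewrite <- (exp_ln _ Hf); apply exp_increasing, HN; lia.
Qed.

Lemma zterm_geometric_bound thlow thbar :
  theta_bar_spec wmax f thbar -> Rbar_lt th thbar ->
  theta_low_spec wmin f thlow -> Rbar_lt thlow th ->
  exists C r, 0 <= C /\ 0 < r < 1 /\
    forall z, zterm wmin wmax f th z <= C * r ^ Z.abs_nat z.
Proof.
  intros Hbar Hth1 Hlow Hth2.
  destruct (zterm_ratio_pos thbar Hbar Hth1) as [N1 [r1 [Hr1 H1]]].
  destruct (zterm_ratio_neg thlow Hlow Hth2) as [N2 [r2 [Hr2 H2]]].
  set (r := Rmax r1 r2).
  assert (Hr : 0 < r < 1)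
    by (split; [apply Rlt_le_trans with r1; [lra|apply Rmax_l]|apply Rmax_lub_lt; lra]).
  destruct (geometric_bound_of_eventual_ratio (fun n => zterm wmin wmax f th (Z.of_nat n)) r N1)
    as [C1 [HC1 HB1]]; [lra|intros; apply zterm_nonneg| |].
  { intros n Hn; eapply Rle_trans; [apply H1; auto|].
    apply Rmult_le_compat_r; [apply zterm_nonneg|apply Rmax_l]. }
  destruct (geometric_bound_of_eventual_ratio (fun n => zterm wmin wmax f th (- Z.of_nat n)) r N2)
    as [C2 [HC2 HB2]]; [lra|intros; apply zterm_nonneg| |].
  { intros n Hn; eapply Rle_trans; [apply H2; auto|].
    apply Rmult_le_compat_r; [apply zterm_nonneg|apply Rmax_r]. }
  exists (C1 + C2), r; split; [lra|]; split; auto; intros z.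
  assert (Hp : 0 <= r ^ Z.abs_nat z) by (apply pow_le; lra).
  destruct (Z_le_gt_dec 0 z) as [Hz|Hz].
  - specialize (HB1 (Z.abs_nat z)); simpl in HB1.
    replace (Z.of_nat (Z.abs_nat z)) with z in HB1 by lia; nra.
  - specialize (HB2 (Z.abs_nat z)); simpl in HB2.
    replace (- Z.of_nat (Z.abs_nat z))%Z with z in HB2 by lia; nra.
Qed.

Lemma not_exceeds_of_inI a : inI wmin wmax a -> exceeds wmax a = false.
Proof.
  rewrite inI_iff; intros [_ Ha]; unfold exceeds.
  destruct wmax as [M|]; auto; apply Z.ltb_ge, Ha; auto.
Qed.

(* The form [P y z = S(y, z+1) f y] with [S] symmetric gives
   [P y z * f (z + 1) = f y * P (z + 1) (y - 1)]; monotonicity moves [(y, z)] to the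
   corner [(max y 1, min z 0)] and [(z + 1, y - 1)] to [(1, 0)]. *)
Lemma rate_le_corner (P S : Z -> Z -> R) :
  (forall y z, inI wmin wmax y -> inI wmin wmax z -> inI wmin wmax (z + 1) ->
     P z y <= P (z + 1)%Z y /\ P y (z + 1)%Z <= P y z) ->
  (forall y z, inI wmin wmax y -> inI wmin wmax z -> P y z = ext0 wmax S y (z + 1) * f y) ->
  (forall a b, inI wmin wmax a -> inI wmin wmax b -> S a b = S b a) ->
  forall y z, inI wmin wmax y -> inI wmin wmax z ->
    P y z <= P 1%Z 0%Z * (f (Z.max y 1) / f (Z.min z 0 + 1)%Z).
Proof.
  intros Hmon Hform Hsym y z Hy Hz.
  assert (I0 := inI_0 _ _ Hbounds); assert (I1 := inI_1 _ _ Hbounds).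
  set (y' := Z.max y 1); set (z' := Z.min z 0).
  assert (Iy' : inI wmin wmax y') by (apply inI_max; auto).
  assert (Iz' : inI wmin wmax z') by (apply inI_min; auto).
  assert (Iz1 : inI wmin wmax (z' + 1)) by (apply (inI_between _ _ z' 1); auto; unfold z'; lia).
  assert (Iy1 : inI wmin wmax (y' - 1)) by (apply (inI_between _ _ 0 y'); auto; unfold y'; lia).
  assert (Hfz : 0 < f (z' + 1)%Z) by (apply (f_pos_above z'); auto; lia).
  assert (Hfy : 0 < f y') by (apply (f_pos_above 0); auto; unfold y'; lia).
  assert (Hyz : P y z <= P y' z').
  { apply Rle_trans with (P y' z).
    - apply (I_nondecreasing wmin wmax (fun a => P a z)); auto; [|unfold y'; lia].
      intros a Ha Ha1; apply (Hmon z a); auto.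
    - apply (I_nonincreasing wmin wmax (fun b => P y' b)); auto; [|unfold z'; lia].
      intros b Hb Hb1; apply (Hmon y' b); auto. }
  assert (Hcorner : P (z' + 1)%Z (y' - 1)%Z <= P 1%Z 0%Z).
  { apply Rle_trans with (P 1%Z (y' - 1)%Z).
    - apply (I_nondecreasing wmin wmax (fun a => P a (y' - 1)%Z)); auto; [|unfold z'; lia].
      intros a Ha Ha1; apply (Hmon (y' - 1)%Z a); auto.
    - apply (I_nonincreasing wmin wmax (fun b => P 1%Z b)); auto; [|unfold y'; lia].
      intros b Hb Hb1; apply (Hmon 1%Z b); auto. }
  assert (Hswap : P y' z' * f (z' + 1)%Z = f y' * P (z' + 1)%Z (y' - 1)%Z).
  { rewrite !Hform by auto; unfold ext0.
    replace (y' - 1 + 1)%Z with y' by lia.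
    rewrite !not_exceeds_of_inI, Hsym by auto; simpl; ring. }
  apply (Rle_trans _ _ _ Hyz).
  replace (P y' z') with (f y' * P (z' + 1)%Z (y' - 1)%Z / f (z' + 1)%Z)
    by (rewrite <- Hswap; field; lra).
  replace (P 1%Z 0%Z * (f y' / f (z' + 1)%Z)) with (f y' * P 1%Z 0%Z / f (z' + 1)%Z)
    by (field; lra).
  apply Rmult_le_compat_r; [left; apply Rinv_0_lt_compat; lra|].
  apply Rmult_le_compat_l; lra.
Qed.

Section Shifts.
Variables C r : R.
Hypotheses (HC : 0 <= C) (Hr : 0 < r).
Hypothesis Hgeom : forall z, zterm wmin wmax f th z <= C * r ^ Z.abs_nat z.

(* For [t >= 1] the factor [f t] is absorbed by one step of [zterm_succ]. *)
Lemma zterm_mul_f_geometric_bound t : inI wmin wmax t ->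
  zterm wmin wmax f th t * f (Z.max t 1)
  <= C * (f 1%Z + exp th / r) * r ^ Z.abs_nat t.
Proof.
  intros Ht.
  assert (Hf1 := f_1_pos).
  assert (He : 0 < exp th / r) by (apply Rdiv_lt_0_compat; [apply exp_pos|lra]).
  assert (Hp : 0 <= C * r ^ Z.abs_nat t) by (apply Rmult_le_pos; [|apply pow_le]; lra).
  destruct (Z_le_gt_dec t 0) as [Hz|Hz].
  - replace (Z.max t 1) with 1%Z by lia.
    apply Rle_trans with (C * r ^ Z.abs_nat t * f 1%Z); [apply Rmult_le_compat_r; auto; lra|nra].
  - replace (Z.max t 1) with t by lia.
    assert (It1 : inI wmin wmax (t - 1))
      by (apply (inI_between _ _ 0 t); [apply inI_0| |]; auto; lia).
    assert (Hrec := zterm_succ (t - 1) It1); replace (t - 1 + 1)%Z with t in Hrec by lia.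
    rewrite (Hrec Ht).
    replace (Z.abs_nat t) with (S (Z.abs_nat (t - 1))) by lia; simpl pow.
    assert (Hp' : 0 <= C * r ^ Z.abs_nat (t - 1)) by (apply Rmult_le_pos; [|apply pow_le]; lra).
    apply Rle_trans with (exp th * (C * r ^ Z.abs_nat (t - 1))).
    + apply Rmult_le_compat_l; [left; apply exp_pos|auto].
    + replace (C * (f 1%Z + exp th / r) * (r * r ^ Z.abs_nat (t - 1)))
        with (f 1%Z * r * (C * r ^ Z.abs_nat (t - 1)) + exp th * (C * r ^ Z.abs_nat (t - 1)))
        by (field; lra).
      assert (0 <= f 1%Z * r * (C * r ^ Z.abs_nat (t - 1))) by (apply Rmult_le_pos; nra).
      lra.
Qed.

Lemma zterm_div_f_geometric_bound t : inI wmin wmax t ->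
  zterm wmin wmax f th t / f (Z.min t 0 + 1)%Z
  <= C * (/ f 1%Z + exp (- th) / r) * r ^ Z.abs_nat t.
Proof.
  intros Ht.
  assert (Hf1 := f_1_pos); assert (Hi1 : 0 < / f 1%Z) by (apply Rinv_0_lt_compat; auto).
  assert (He : 0 < exp (- th) / r) by (apply Rdiv_lt_0_compat; [apply exp_pos|lra]).
  assert (Hp : 0 <= C * r ^ Z.abs_nat t) by (apply Rmult_le_pos; [|apply pow_le]; lra).
  destruct (Z_le_gt_dec 0 t) as [Hz|Hz].
  - replace (Z.min t 0 + 1)%Z with 1%Z by lia; unfold Rdiv at 1.
    apply Rle_trans with (C * r ^ Z.abs_nat t * / f 1%Z); [apply Rmult_le_compat_r; auto; lra|nra].
  - replace (Z.min t 0) with t by lia.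
    assert (It1 : inI wmin wmax (t + 1))
      by (apply (inI_between _ _ t 0); [|apply inI_0|]; auto; lia).
    rewrite zterm_div_f_succ by auto.
    replace (Z.abs_nat t) with (S (Z.abs_nat (t + 1))) by lia; simpl pow.
    assert (Hp' : 0 <= C * r ^ Z.abs_nat (t + 1)) by (apply Rmult_le_pos; [|apply pow_le]; lra).
    apply Rle_trans with (exp (- th) * (C * r ^ Z.abs_nat (t + 1))).
    + apply Rmult_le_compat_l; [left; apply exp_pos|auto].
    + replace (C * (/ f 1%Z + exp (- th) / r) * (r * r ^ Z.abs_nat (t + 1)))
        with (/ f 1%Z * r * (C * r ^ Z.abs_nat (t + 1)) + exp (- th) * (C * r ^ Z.abs_nat (t + 1)))
        by (field; lra).
      assert (0 <= / f 1%Z * r * (C * r ^ Z.abs_nat (t + 1))) by (apply Rmult_le_pos; nra).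
      lra.
Qed.

Lemma zterm_rate_geometric_bound (P S : Z -> Z -> R) :
  (forall y z, inI wmin wmax y -> inI wmin wmax z -> inI wmin wmax (z + 1) ->
     P z y <= P (z + 1)%Z y /\ P y (z + 1)%Z <= P y z) ->
  (forall y z, inI wmin wmax y -> inI wmin wmax z -> P y z = ext0 wmax S y (z + 1) * f y) ->
  (forall a b, inI wmin wmax a -> inI wmin wmax b -> S a b = S b a) ->
  0 <= P 1%Z 0%Z ->
  exists K, 0 <= K /\ forall y z, inI wmin wmax y -> inI wmin wmax z ->
    zterm wmin wmax f th y * zterm wmin wmax f th z * P y z
    <= K * (r ^ Z.abs_nat y * r ^ Z.abs_nat z).
Proof.
  intros Hmon Hform Hsym HP0.
  set (C1 := C * (f 1%Z + exp th / r)); set (C2 := C * (/ f 1%Z + exp (- th) / r)).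
  assert (Hf1 := f_1_pos); assert (Hi1 : 0 < / f 1%Z) by (apply Rinv_0_lt_compat; auto).
  assert (He1 : 0 < exp th / r) by (apply Rdiv_lt_0_compat; [apply exp_pos|lra]).
  assert (He2 : 0 < exp (- th) / r) by (apply Rdiv_lt_0_compat; [apply exp_pos|lra]).
  assert (HC12 : 0 <= C1 * C2) by (apply Rmult_le_pos; apply Rmult_le_pos; lra).
  exists (P 1%Z 0%Z * (C1 * C2)); split; [apply Rmult_le_pos; auto|].
  intros y z Hy Hz.
  assert (I0 := inI_0 _ _ Hbounds); assert (I1 := inI_1 _ _ Hbounds).
  assert (Iz1 : inI wmin wmax (Z.min z 0 + 1))
    by (apply (inI_between _ _ (Z.min z 0) 1); [apply inI_min| |]; auto; lia).
  assert (Hfz : 0 < f (Z.min z 0 + 1)%Z)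
    by (apply (f_pos_above (Z.min z 0)); [apply inI_min| |lia]; auto).
  assert (Hfy : 0 < f (Z.max y 1)) by (apply (f_pos_above 0); [|apply inI_max|lia]; auto).
  assert (Hcorner := rate_le_corner P S Hmon Hform Hsym y z Hy Hz).
  assert (Hup := zterm_mul_f_geometric_bound y Hy).
  assert (Hdown := zterm_div_f_geometric_bound z Hz).
  fold C1 in Hup; fold C2 in Hdown.
  set (ty := zterm wmin wmax f th y) in *; set (tz := zterm wmin wmax f th z) in *.
  assert (Hty : 0 <= ty) by apply zterm_nonneg; assert (Htz : 0 <= tz) by apply zterm_nonneg.
  set (Fy := f (Z.max y 1)) in *; set (Fz := f (Z.min z 0 + 1)%Z) in *.
  apply Rle_trans with (P 1%Z 0%Z * ((ty * Fy) * (tz / Fz))).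
  - replace (P 1%Z 0%Z * ((ty * Fy) * (tz / Fz))) with (ty * tz * (P 1%Z 0%Z * (Fy / Fz)))
      by (field; lra).
    apply Rmult_le_compat_l; [nra|auto].
  - rewrite (Rmult_assoc (P 1%Z 0%Z)); apply Rmult_le_compat_l; auto.
    replace (C1 * C2 * (r ^ Z.abs_nat y * r ^ Z.abs_nat z))
      with ((C1 * r ^ Z.abs_nat y) * (C2 * r ^ Z.abs_nat z)) by ring.
    apply Rmult_le_compat; auto; [nra|apply Rdiv_le_0_compat; lra].
Qed.

Lemma zterm_rates_geometric_bound (p q sp sq : Z -> Z -> R) :
  rates_nonneg wmin wmax p q -> rates_R2 wmin wmax p q -> rates_R4 wmin wmax p q sp sq f ->
  exists E, 0 <= E /\ forall y z, inI wmin wmax y -> inI wmin wmax z ->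
    zterm wmin wmax f th y * zterm wmin wmax f th z * (p y z + q y z)
    <= E * (r ^ Z.abs_nat y * r ^ Z.abs_nat z).
Proof.
  intros Hnn HR2 [Hsym [_ [_ [_ Hform]]]].
  assert (I0 := inI_0 _ _ Hbounds); assert (I1 := inI_1 _ _ Hbounds).
  destruct (zterm_rate_geometric_bound p sp) as [Kp [HKp Hp]].
  { intros y z Hy Hz Hz1; destruct (HR2 y z Hy Hz Hz1) as [H1 [H2 _]]; lra. }
  { intros y z Hy Hz; apply (Hform y z Hy Hz). }
  { intros a b Ha Hb; apply (Hsym a b Ha Hb). }
  { apply (Hnn 1%Z 0%Z); auto. }
  destruct (zterm_rate_geometric_bound (fun a b => q b a) (fun a b => sq b a)) as [Kq [HKq Hq]].
  { intros y z Hy Hz Hz1; destruct (HR2 y z Hy Hz Hz1) as [_ [_ [H3 H4]]]; lra. }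
  { intros y z Hy Hz; rewrite (proj2 (Hform z y Hz Hy)); unfold ext0; now rewrite orb_comm. }
  { intros a b Ha Hb; apply (Hsym b a Hb Ha). }
  { apply (Hnn 0%Z 1%Z); auto. }
  exists (Kp + Kq); split; [lra|]; intros y z Hy Hz.
  specialize (Hp y z Hy Hz); specialize (Hq z y Hz Hy); simpl in Hq.
  nra.
Qed.

End Shifts.

End Weights.

Lemma double_sum_poly_le d (c : nat -> nat -> R) Y Z : 0 <= Y -> 0 <= Z ->
  sum_f_R0 (fun i => sum_f_R0 (fun j => c i j * Y ^ i * Z ^ j) d) d <=
  sum_f_R0 (fun i => sum_f_R0 (fun j => Rabs (c i j)) d) d * ((1 + Y) ^ d * (1 + Z) ^ d).
Proof.
  intros HY HZ; set (W := (1 + Y) ^ d * (1 + Z) ^ d).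
  apply Rle_trans with (sum_f_R0 (fun i => sum_f_R0 (fun j => Rabs (c i j) * W) d) d).
  - apply sum_Rle; intros i Hi; apply sum_Rle; intros j Hj.
    assert (HYi : Y ^ i <= (1 + Y) ^ d)
      by (apply Rle_trans with ((1 + Y) ^ i); [apply pow_incr|apply Rle_pow]; auto; lra).
    assert (HZj : Z ^ j <= (1 + Z) ^ d)
      by (apply Rle_trans with ((1 + Z) ^ j); [apply pow_incr|apply Rle_pow]; auto; lra).
    assert (0 <= Y ^ i) by (apply pow_le; lra); assert (0 <= Z ^ j) by (apply pow_le; lra).
    assert (Hc := Rle_abs (c i j)); assert (0 <= Rabs (c i j)) by apply Rabs_pos.
    apply Rle_trans with (Rabs (c i j) * (Y ^ i * Z ^ j)).
    + rewrite <- Rmult_assoc; apply Rmult_le_compat_r; nra.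
    + apply Rmult_le_compat_l; auto; apply Rmult_le_compat; auto.
  - right; rewrite Rmult_comm, scal_sum; apply sum_eq; intros i Hi.
    rewrite Rmult_comm, scal_sum; apply sum_eq; intros j Hj; ring.
Qed.

Lemma poly_bounded_le_product g : poly_bounded g ->
  exists d D, 0 <= D /\ forall y z,
    g y z <= D * ((1 + INR (Z.abs_nat y)) ^ d * (1 + INR (Z.abs_nat z)) ^ d).
Proof.
  intros [d [c Hc]].
  exists d, (sum_f_R0 (fun i => sum_f_R0 (fun j => Rabs (c i j)) d) d); split.
  - apply cond_pos_sum; intros i; apply cond_pos_sum; intros j; apply Rabs_pos.
  - intros y z; rewrite !INR_IZR_INZ, !Zabs2Nat.id_abs, !abs_IZR.
    apply (Rle_trans _ _ _ (Hc y z)), double_sum_poly_le; apply Rabs_pos.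
Qed.

Definition geometric_poly_weight (r : R) (d : nat) (t : Z) : R :=
  r ^ Z.abs_nat t * (1 + INR (Z.abs_nat t)) ^ d.

Lemma geometric_poly_weight_nonneg r d t : 0 <= r -> 0 <= geometric_poly_weight r d t.
Proof.
  intros Hr; apply Rmult_le_pos; apply pow_le; [lra|].
  pose proof (pos_INR (Z.abs_nat t)); lra.
Qed.

Lemma sumZ_geometric_poly_weight_bounded r d : 0 < r < 1 ->
  exists S, forall N, sumZ N (geometric_poly_weight r d) <= S.
Proof.
  intros Hr; destruct (pow_mul_geometric_bound d r Hr) as [K [HK Hbound]].
  exists (2 * (K / (1 - (1 + r) / 2))); intros N.
  eapply Rle_trans; [apply (sumZ_abs_le (fun n => r ^ n * (1 + INR n) ^ d))|].
  { intros n; apply Rmult_le_pos; apply pow_le; [lra|]; pose proof (pos_INR n); lra. }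
  apply Rmult_le_compat_l; [lra|].
  eapply Rle_trans; [|apply (sum_f_R0_geometric_le K _ N HK); lra].
  apply sum_Rle; intros n _; apply Hbound.
Qed.

Lemma finite_expectation2_of_zterm_bound wmin wmax f th h (a : Z -> R) K S :
  0 <= K -> (forall t, 0 <= a t) -> (forall N, sumZ N a <= S) ->
  (forall y z, inI wmin wmax y -> inI wmin wmax z ->
     zterm wmin wmax f th y * zterm wmin wmax f th z * h y z <= K * (a y * a z)) ->
  finite_expectation2 wmin wmax f th h.
Proof.
  intros HK Ha HS Hbound.
  set (k := / Zpart wmin wmax f th).
  exists (k * k * K * (S * S)); intros N; unfold box_expect.
  apply Rle_trans with (sumZ N (fun y => sumZ N (fun z => k * k * K * a y * a z))).
  { apply sumZ_le; intros y; apply sumZ_le; intros z.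
    assert (Hk : 0 <= k * k) by apply Rle_0_sqr.
    assert (0 <= a y) by auto; assert (0 <= a z) by auto.
    destruct (inIb wmin wmax y) eqn:Ey, (inIb wmin wmax z) eqn:Ez; simpl;
      [|apply Rmult_le_pos; [apply Rmult_le_pos|]; nra..].
    rewrite !mu_zterm by auto; fold k.
    specialize (Hbound y z Ey Ez).
    replace (k * zterm wmin wmax f th y * (k * zterm wmin wmax f th z) * h y z)
      with (k * k * (zterm wmin wmax f th y * zterm wmin wmax f th z * h y z)) by ring.
    replace (k * k * K * a y * a z) with (k * k * (K * (a y * a z))) by ring.
    apply Rmult_le_compat_l; auto. }
  rewrite (sumZ_mul N (fun y => k * k * K * a y) a), sumZ_scal.
  assert (H0 : 0 <= sumZ N a) by (apply sumZ_nonneg; auto); assert (HSN := HS N).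
  rewrite Rmult_assoc; apply Rmult_le_compat_l; [apply Rmult_le_pos; [apply Rle_0_sqr|auto]|].
  apply Rmult_le_compat; auto.
Qed.

Theorem lemmaC2
  (wmin wmax : option Z) (p q : Z -> Z -> R)
  (sp sq : Z -> Z -> R) (f : Z -> R) (thlow thbar : Rbar)
  (Hbounds : bounds_ok wmin wmax)
  (Hnn : rates_nonneg wmin wmax p q)
  (HR1 : rates_R1 wmin wmax p q) (HR2 : rates_R2 wmin wmax p q) (HR3 : rates_R3 wmin wmax p q)
  (HR4 : rates_R4 wmin wmax p q sp sq f)
  (Hbar : theta_bar_spec wmax f thbar) (Hlow : theta_low_spec wmin f thlow)
  (Hlt : Rbar_lt thlow thbar)
  (g : Z -> Z -> R) (Hg0 : forall y z, 0 <= g y z) (Hgpoly : poly_bounded g)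
  (th : R) (Hth1 : Rbar_lt thlow (Finite th)) (Hth2 : Rbar_lt (Finite th) thbar) :
  finite_expectation2 wmin wmax f th (fun y z => (p y z + q y z) * g y z).
Proof.
  assert (Hf_pos := proj1 (proj2 (proj2 (proj2 HR4)))).
  destruct (zterm_geometric_bound wmin wmax f Hbounds Hf_pos th thlow thbar Hbar Hth2 Hlow Hth1)
    as [C [r [HC [Hr Hgeom]]]].
  destruct (zterm_rates_geometric_bound wmin wmax f Hbounds Hf_pos th C r HC (proj1 Hr) Hgeom
              p q sp sq Hnn HR2 HR4) as [E [HE Hrates]].
  destruct (poly_bounded_le_product g Hgpoly) as [d [D [HD Hg]]].
  destruct (sumZ_geometric_poly_weight_bounded r d Hr) as [S HS].
  apply (finite_expectation2_of_zterm_bound _ _ _ _ _ (geometric_poly_weight r d) (E * D) S);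
    auto; [nra| |].
  { intros t; apply geometric_poly_weight_nonneg; lra. }
  intros y z Hy Hz; unfold geometric_poly_weight.
  specialize (Hrates y z Hy Hz); specialize (Hg y z).
  set (wy := (1 + INR (Z.abs_nat y)) ^ d) in *; set (wz := (1 + INR (Z.abs_nat z)) ^ d) in *.
  assert (0 <= zterm wmin wmax f th y * zterm wmin wmax f th z * (p y z + q y z))
    by (destruct (Hnn y z Hy Hz); apply Rmult_le_pos;
        [apply Rmult_le_pos; apply (zterm_nonneg _ _ _ Hbounds Hf_pos)|lra]).
  replace (E * D * (r ^ Z.abs_nat y * wy * (r ^ Z.abs_nat z * wz)))
    with (E * (r ^ Z.abs_nat y * r ^ Z.abs_nat z) * (D * (wy * wz))) by ring.
  rewrite <- Rmult_assoc; apply Rmult_le_compat; auto.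
Qed.
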